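(* Let $k<l$ be positive integers and $\gamma\in PU(k,l)$. Then $\gamma$ has a fixed point in the closure $\overline{\mathbb{H}^{k,l}_{\mathbb{C}}}$ of $\mathbb{H}^{k,l}_{\mathbb{C}}$ in $\mathbb{P}^{k+l-1}_{\mathbb{C}}$.
   Context: $\mathbb{C}^{k,l}$ is $\mathbb{C}^{k+l}$ with the Hermitian form $\prec u,v\succ_{k,l}=-\sum_{j=1}^k u_j\bar v_j+\sum_{j=k+1}^{k+l}u_j\bar v_j$; $N_-^{k,l}$ is the set of vectors $v$ with $\prec v,v\succ_{k,l}<0$; $\mathbb{H}^{k,l}_{\mathbb{C}}=[N_-^{k,l}]\subset\mathbb{P}^{k+l-1}_{\mathbb{C}}$. $U(k,l)\subset GL(k+l,\mathbb{C})$ is the group preserving the form and $PU(k,l)$ its image in $PSL(k+l,\mathbb{C})$. The paper assumes $k<l$ throughout when using this notation. *)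

From HB Require Import structures.
From mathcomp Require Import all_boot all_order all_algebra.
From mathcomp Require Import complex.
From mathcomp Require Import all_classical all_reals all_analysis.
Set Implicit Arguments. Unset Strict Implicit. Unset Printing Implicit Defensive.
Import Order.TTheory GRing.Theory Num.Theory.
Import numFieldNormedType.Exports.
Local Open Scope ring_scope.
Local Open Scope classical_set_scope.

(** The complex numbers, as R[i] for a real type R, viewed through the
    regular-algebra alias ^o so that it carries its standard (norm)
    topology; column vectors 'cV[Cx R]_n then carry the product
    (= Euclidean) topology. *)
Definition Cx (R : realType) := (R[i])^o.

Definition hform (R : realType) (k l : nat) (u v : 'cV[Cx R]_(k + l)) : Cx R :=
  \sum_(j < k + l)
     ((if (j < k)%N then -1 else 1) * (u j 0 * ((v j 0 : R[i])^*)%C)).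

Definition Nminus (R : realType) (k l : nat) : set 'cV[Cx R]_(k + l) :=
  [set v | hform v v < 0].

Definition in_U (R : realType) (k l : nat) (g : 'M[Cx R]_(k + l)) : Prop :=
  g \in unitmx /\ forall u v, hform (g *m u) (g *m v) = hform u v.

Definition saturated (R : realType) (n : nat) (O : set 'cV[Cx R]_n) : Prop :=
  forall (c : Cx R) v, c != 0 -> O v -> O (c *: v).

(** [v] (v <> 0) lies in the closure of [A] in P^{n-1}(C), where P^{n-1}(C)
    carries the quotient topology of C^n \ {0}: every open subset of
    P^{n-1}(C) containing [v] meets [A].  Open subsets of P^{n-1}(C)
    correspond exactly to saturated open subsets of C^n not containing 0. *)
Definition in_proj_closure (R : realType) (n : nat) (A : set 'cV[Cx R]_n)
    (v : 'cV[Cx R]_n) : Prop :=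
  v != 0 /\
  forall O : set 'cV[Cx R]_n, open O -> ~ O 0 -> saturated O -> O v ->
    exists w, O w /\ A w.

Definition proj_fixed (R : realType) (n : nat) (g : 'M[Cx R]_n)
    (v : 'cV[Cx R]_n) : Prop :=
  v != 0 /\ exists lam : Cx R, g *m v = lam *: v.

From HB Require Import structures.
From mathcomp Require Import all_boot all_order all_algebra.
From mathcomp Require Import complex.
From mathcomp Require Import all_classical all_reals all_analysis.
From mathcomp Require Import ring.
Import Order.TTheory GRing.Theory Num.Theory.
Import numFieldNormedType.Exports.
Local Open Scope ring_scope.
Local Open Scope classical_set_scope.
Set Implicit Arguments. Unset Strict Implicit. Unset Printing Implicit Defensive.

(* The key fact is that every g-stable subspace V containing a negative
   vector contains a nonpositive eigenvector of g.  Take any eigenvector x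
   in V (C is algebraically closed); if x is positive, then V meets x^perp in
   a smaller g-stable subspace (g preserves the form and g x is a nonzero
   multiple of x), and it still contains a negative vector, namely the
   orthogonal projection of the negative vector of V, whose norm can only
   decrease.  Applied to V = C^(k+l), this gives a nonzero eigenvector v with
   <v,v> <= 0.  If <v,v> < 0 then [v] lies in H^{k,l}; if <v,v> = 0, moving v
   slightly along a suitable multiple of a negative basis vector makes its
   norm negative, so [v] lies in the closure. *)

Section HermitianForm.
Variables (R : realType) (k l : nat).
Local Notation C := (Cx R).
Local Notation n := (k + l)%N.
Implicit Types (u v w : 'cV[C]_n) (a : C).

Definition hsign (j : 'I_n) : C := if (j < k)%N then -1 else 1.

Lemma conj_hsign j : (hsign j)^* = hsign j.
Proof. by rewrite /hsign; case: ifP; rewrite ?rmorphN rmorph1. Qed.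

Lemma hformE u v : hform u v = \sum_j hsign j * (u j 0 * (v j 0)^*).
Proof. by []. Qed.

Lemma hform0l w : hform 0 w = 0.
Proof. by rewrite hformE big1 // => j _; rewrite mxE mul0r mulr0. Qed.

Lemma hformDl u v w : hform (u + v) w = hform u w + hform v w.
Proof.
by rewrite !hformE -big_split; apply: eq_bigr => j _; rewrite !mxE mulrDl mulrDr.
Qed.

Lemma hformZl a u w : hform (a *: u) w = a * hform u w.
Proof.
rewrite !hformE mulr_sumr; apply: eq_bigr => j _.
by rewrite !mxE mulrCA !mulrA (mulrAC a).
Qed.

Lemma hformC u v : hform v u = (hform u v)^*.
Proof.
rewrite !hformE rmorph_sum; apply: eq_bigr => j _.
by rewrite !rmorphM /= conj_hsign conjCK (mulrC (v j 0)).
Qed.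

Lemma hformDr u v w : hform w (u + v) = hform w u + hform w v.
Proof. by rewrite hformC hformDl rmorphD /= -!hformC. Qed.

Lemma hformZr a u w : hform w (a *: u) = a^* * hform w u.
Proof. by rewrite hformC hformZl rmorphM /= -!hformC. Qed.

Lemma hformBl u v w : hform (u - v) w = hform u w - hform v w.
Proof. by rewrite hformDl -scaleN1r hformZl mulN1r. Qed.

Lemma hformBr u v w : hform w (u - v) = hform w u - hform w v.
Proof. by rewrite hformDr -scaleN1r hformZr rmorphN1 mulN1r. Qed.

Lemma hform_real u : hform u u \is Num.real.
Proof. by rewrite CrealE -hformC. Qed.

Lemma hform_delta (i : 'I_n) : hform (delta_mx i 0) (delta_mx i 0) = hsign i.
Proof.
rewrite hformE (bigD1 i) //= big1 ?addr0 => [|j /negbTE ji].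
  by rewrite !mxE !eqxx /= rmorph_nat !mulr1.
by rewrite !mxE ji !mul0r mulr0.
Qed.

Definition hproj u w := w - (hform w u / hform u u) *: u.

Lemma hform_hprojl u w : hform u u != 0 -> hform (hproj u w) u = 0.
Proof. by move=> u0; rewrite hformBl hformZl mulfVK // subrr. Qed.

Lemma hform_hprojE u w : hform u u != 0 ->
  hform (hproj u w) (hproj u w) = hform w w - hform w u * (hform w u)^* / hform u u.
Proof.
move=> u0; rewrite !(hformBl, hformBr, hformZl, hformZr) [hform u w]hformC.
by rewrite rmorphM /= fmorphV /= (conj_Creal (hform_real u)); field.
Qed.

Lemma hform_hproj_le u w : 0 < hform u u -> hform (hproj u w) (hproj u w) <= hform w w.
Proof.
move=> u_gt0; rewrite hform_hprojE ?gt_eqF // gerBl.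
by rewrite divr_ge0 ?mul_conjC_ge0 ?ltW.
Qed.

End HermitianForm.

Section OrthogonalPart.
Variables (R : realType) (k l : nat).
Local Notation C := (Cx R).
Local Notation n := (k + l)%N.

Lemma stable_eigenvector (p : nat) (V f : 'M[C]_p) : (V *m f <= V)%MS -> V != 0 ->
  exists a (x : 'rV[C]_p), [/\ x != 0, (x <= V)%MS & x *m f = a *: x].
Proof.
move=> Vf V0; have rV : (0 < \rank V)%N by rewrite lt0n mxrank_eq0.
have [a /eigenvalueP [y ey y0]] := Theorem7' (complex.restrict V f) rV.
exists a, (y *m row_base V); split.
- by rewrite mul_mx_rowfree_eq0 ?row_base_free.
- by rewrite (submx_trans (submxMl _ _)) ?eq_row_base.
- by apply/eigenspaceP; rewrite -eigenspace_restrict //; apply/eigenspaceP.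
Qed.

(* Subspaces in mxalgebra are row spaces, so vectors are rows from here on and
   the form is applied to their transposes: y *m hform_col x = <y^T, x^T>. *)
Definition hform_col (x : 'rV[C]_n) : 'cV[C]_n := \col_j (@hsign R k l j * (x 0 j)^*).

Lemma sub_kermx_hform_col (x y : 'rV[C]_n) :
  (y <= kermx (hform_col x))%MS = (hform y^T x^T == 0).
Proof.
have yx : y *m hform_col x = (hform y^T x^T)%:M.
  apply/matrixP => i j; rewrite !ord1 !mxE hformE; apply: eq_bigr => j' _.
  by rewrite !mxE mulrCA.
by rewrite sub_kermx yx -scalemx1 scalemx_eq0 oner_eq0 orbF.
Qed.

Definition orth_part (V : 'M[C]_n) (x : 'rV[C]_n) := (V :&: kermx (hform_col x))%MS.

Lemma sub_orth_part (V : 'M[C]_n) (x y : 'rV[C]_n) :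
  (y <= orth_part V x)%MS = (y <= V)%MS && (hform y^T x^T == 0).
Proof. by rewrite sub_capmx sub_kermx_hform_col. Qed.

Lemma rank_orth_part (V : 'M[C]_n) (x : 'rV[C]_n) :
  (x <= V)%MS -> hform x^T x^T != 0 -> (\rank (orth_part V x) < \rank V)%N.
Proof.
move=> xV xx; apply: rank_ltmx; rewrite ltmxE capmxSl /=.
by apply: contraNN xx => /(submx_trans xV); rewrite sub_orth_part => /andP[].
Qed.

Lemma orth_part_neg (V : 'M[C]_n) (x w : 'rV[C]_n) :
  (x <= V)%MS -> 0 < hform x^T x^T -> (w <= V)%MS -> hform w^T w^T < 0 ->
  exists2 w', (w' <= orth_part V x)%MS & hform w'^T w'^T < 0.
Proof.
move=> xV xpos wV wneg; exists (hproj x^T w^T)^T; last first.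
  by rewrite trmxK (le_lt_trans (hform_hproj_le _ xpos)).
rewrite sub_orth_part trmxK hform_hprojl ?eqxx ?andbT; last by rewrite gt_eqF.
by rewrite linearB linearZ /= !trmxK addmx_sub // -scaleNr scalemx_sub.
Qed.

End OrthogonalPart.

Section StableSubspace.
Variables (R : realType) (k l : nat).
Local Notation C := (Cx R).
Local Notation n := (k + l)%N.
Variable g : 'M[C]_n.
Hypothesis gU : in_U g.

Lemma eigenvalue_neq0 (x : 'rV[C]_n) a : x != 0 -> x *m g^T = a *: x -> a != 0.
Proof.
move=> x0 ex; apply: contra_neq x0 => a0.
have gT : g^T \in unitmx by rewrite unitmx_tr; case: gU.
by move: ex; rewrite a0 scale0r => /(congr1 (mulmx^~ (invmx g^T))); rewrite mulmxK // mul0mx.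
Qed.

Lemma hform_orth_eigenvector (x y : 'rV[C]_n) a :
  x *m g^T = a *: x -> a != 0 -> hform y^T x^T = 0 ->
  hform (y *m g^T)^T x^T = 0.
Proof.
case: gU => _ gH ex a0 yx.
have gx : x^T = g *m (a^-1 *: x^T).
  by rewrite -scalemxAr -[g]trmxK -trmx_mul ex linearZ /= scalerA mulVf ?scale1r.
by rewrite trmx_mul trmxK gx gH hformZr yx mulr0.
Qed.

Lemma stable_orth_part (V : 'M[C]_n) (x : 'rV[C]_n) a :
  (V *m g^T <= V)%MS -> x != 0 -> x *m g^T = a *: x ->
  (orth_part V x *m g^T <= orth_part V x)%MS.
Proof.
move=> Vg x0 ex; have a0 := eigenvalue_neq0 x0 ex.
apply/row_subP => i; rewrite row_mul.
have /[!sub_orth_part] /andP[iV /eqP ix] := row_sub i (orth_part V x).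
by rewrite (submx_trans (submxMr _ iV) Vg) (hform_orth_eigenvector ex a0 ix) /=; apply/eqP.
Qed.

Lemma stable_nonpos_eigenvector (V : 'M[C]_n) : (V *m g^T <= V)%MS ->
  (exists2 w : 'rV[C]_n, (w <= V)%MS & hform w^T w^T < 0) ->
  exists x : 'rV[C]_n,
    [/\ x != 0, exists a, x *m g^T = a *: x & hform x^T x^T <= 0].
Proof.
have [m] := ubnP (\rank V); elim: m V => // m IH V; rewrite ltnS => rV Vg [w wV wneg].
have V0 : V != 0.
  by apply: contraTneq wneg => V0; move: wV; rewrite V0 submx0 => /eqP->; rewrite trmx0 hform0l ltxx.
have [a [x [x0 xV ex]]] := stable_eigenvector Vg V0.
have [xpos|] := boolP (0 < hform x^T x^T); last first.
  by rewrite -real_leNgt ?real0 ?hform_real // => xnp; exists x; split => //; exists a.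
apply: (IH (orth_part V x)).
- exact: leq_trans (rank_orth_part xV (lt0r_neq0 xpos)) rV.
- exact: stable_orth_part Vg x0 ex.
- exact: orth_part_neg xV xpos wV wneg.
Qed.

End StableSubspace.

Section Closure.
Variables (R : realType) (k l : nat).
Local Notation C := (Cx R).
Local Notation n := (k + l)%N.

Lemma open_shift_pos (V : normedModType C) (v z : V) (O : set V) :
  open O -> O v -> exists2 t : C, 0 < t & O (v + t *: z).
Proof.
move=> oO Ov; pose f (s : C) := v + s *: z.
have f0 : f @ (0 : C) --> v.
  have -> : v = v + 0 *: z by rewrite scale0r addr0.
  exact: cvgD (cvg_cst v) (@scalel_continuous C _ z 0).
have /nbhs_ballP [e /= e0 sub] : nbhs (0 : C) (f @^-1` O).
  by apply: f0; apply: open_nbhs_nbhs.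
exists (e / 2); first by rewrite divr_gt0.
apply: sub; rewrite -ball_normE /= sub0r normrN ger0_norm ?divr_ge0 ?ltW //.
by rewrite ltr_pdivrMr // ltr_pMr // ltr1n.
Qed.

Lemma null_vector_neg_direction (v : 'cV[C]_n) : (0 < k)%N -> hform v v = 0 ->
  exists z, forall t : C, 0 < t -> hform (v + t *: z) (v + t *: z) < 0.
Proof.
move=> k0 vv; pose u : 'cV[C]_n := delta_mx (Ordinal (ltn_addr l k0)) 0.
have uu : hform u u = -1 by rewrite hform_delta /hsign k0.
set c := hform v u; have uv : hform u v = c^* by exact: hformC.
have normE s : hform (v + s *: u) (v + s *: u) = s * c^* + s^* * c - s * s^*.
  by rewrite !(hformDl, hformDr, hformZl, hformZr) vv uu uv -/c; ring.
have [c0 | c0] := eqVneq c 0.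
  exists u => t t0; rewrite normE c0 rmorph0 !mulr0 addr0 sub0r oppr_lt0.
  by rewrite mul_conjC_gt0 (gt_eqF t0).
exists (- c *: u) => t t0.
rewrite scalerA normE rmorphM rmorphN /= (conj_Creal (gtr0_real t0)) -oppr_gt0.
rewrite (_ : - (_ + _ - _) = (t + t + t * t) * (c * c^*)); last by ring.
by rewrite mulr_gt0 ?mul_conjC_gt0 // !addr_gt0 ?mulr_gt0.
Qed.

Lemma nonpos_in_proj_closure (v : 'cV[C]_n) : (0 < k)%N -> v != 0 ->
  hform v v <= 0 -> in_proj_closure (@Nminus R k l) v.
Proof.
move=> k0 v0; rewrite le_eqVlt => /orP[/eqP vv | vneg]; split=> // O oO _ _ Ov.
  have [z zneg] := null_vector_neg_direction k0 vv.
  have [t t0 Ot] := open_shift_pos z oO Ov.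
  by exists (v + t *: z); split => //; apply: zneg.
by exists v.
Qed.

End Closure.

Theorem mainTheorem13 (R : realType) (k l : nat) (hk : (0 < k)%N) (hkl : (k < l)%N)
    (g : 'M[Cx R]_(k + l)) (hg : in_U g) :
  exists v : 'cV[Cx R]_(k + l),
    in_proj_closure (@Nminus R k l) v /\ proj_fixed g v.
Proof.
have [||x [x0 [a ex] xnp]] := @stable_nonpos_eigenvector R k l g hg 1%:M.
- exact: submx1.
- exists (delta_mx 0 (Ordinal (ltn_addr l hk))); first exact: submx1.
  by rewrite trmx_delta hform_delta /hsign hk ltrN10.
exists x^T; split; first by apply: nonpos_in_proj_closure; rewrite ?trmx_eq0.
split; first by rewrite trmx_eq0.
by exists a; rewrite -[g]trmxK -trmx_mul ex linearZ.
Qed.
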